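(* For a random subcomplex $X$ of $\triangle_n$ the following are equivalent: (1) $X$ is spatially independent; (2) for all $Y_1,Y_2\in S_n$ with $\mathbb{P}(Y_2\subset X)>0$, $\mathbb{P}(Y_1\subset X\mid Y_2\subset X)=\mathbb{P}(Y_1\subset X\mid Y_1\cap Y_2\subset X)$; (3) for all $Y_1,Y_2\in S_n$ with $\mathbb{P}(Y_1\cap Y_2\subset X)>0$, $\mathbb{P}(Y_1\cup Y_2\subset X\mid Y_1\cap Y_2\subset X)=\mathbb{P}(Y_1\subset X\mid Y_1\cap Y_2\subset X)\,\mathbb{P}(Y_2\subset X\mid Y_1\cap Y_2\subset X)$; (4) for all $Y_1,Y_2,Z\in S_n$ with $Y_1\cap Y_2\subset Z$ and $\mathbb{P}(Z\subset X)>0$, $\mathbb{P}(Y_1\cup Y_2\subset X\mid Z\subset X)=\mathbb{P}(Y_1\subset X\mid Z\subset X)\,\mathbb{P}(Y_2\subset X\mid Z\subset X)$.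
   Context: $\triangle_n=2^{[n]}$; $S_n$ is the set of subcomplexes of $\triangle_n$ (families of subsets of $[n]$ closed under taking subsets); a random subcomplex is an $S_n$-valued random variable. $X$ is spatially independent if $\mathbb{P}(Y_1\cup Y_2\subset X)\,\mathbb{P}(Y_1\cap Y_2\subset X)=\mathbb{P}(Y_1\subset X)\,\mathbb{P}(Y_2\subset X)$ for all $Y_1,Y_2\in S_n$. *)

From HB Require Import structures.
From mathcomp Require Import all_boot all_order all_algebra.
Set Implicit Arguments. Unset Strict Implicit. Unset Printing Implicit Defensive.
Import Order.TTheory GRing.Theory Num.Theory.
Local Open Scope ring_scope.

(* Faces of the full simplex on [n] = {0,..,n-1} are subsets of 'I_n;
   a family of faces is a {set {set 'I_n}}. *)
Definition is_complex (n : nat) (Y : {set {set 'I_n}}) : bool :=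
  [forall s : {set 'I_n}, forall t : {set 'I_n},
     (s \in Y) && (t \subset s) ==> (t \in Y)].

Definition random_subcomplex (R : realFieldType) (n : nat)
    (p : {set {set 'I_n}} -> R) : Prop :=
  [/\ forall X, 0 <= p X,
      \sum_(X : {set {set 'I_n}}) p X = 1
    & forall X, p X != 0 -> is_complex X].

Definition Pin (R : realFieldType) (n : nat) (p : {set {set 'I_n}} -> R)
    (Y : {set {set 'I_n}}) : R :=
  \sum_(X : {set {set 'I_n}} | Y \subset X) p X.

Definition Pcond (R : realFieldType) (n : nat) (p : {set {set 'I_n}} -> R)
    (Y1 Y2 : {set {set 'I_n}}) : R :=
  (\sum_(X : {set {set 'I_n}} | (Y1 \subset X) && (Y2 \subset X)) p X)
    / Pin p Y2.

Definition spatially_independent (R : realFieldType) (n : nat)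
    (p : {set {set 'I_n}} -> R) : Prop :=
  forall Y1 Y2 : {set {set 'I_n}}, is_complex Y1 -> is_complex Y2 ->
    Pin p (Y1 :|: Y2) * Pin p (Y1 :&: Y2) = Pin p Y1 * Pin p Y2.

(* Everything reduces to the identity P(Y1 | Y2) = P(Y1 u Y2) / P(Y2): each of
   (2), (3), (4) is then the product rule (1) divided by a positive probability,
   and (4) follows from (1) applied to Y1 u Z and Y2 u Z, whose intersection is Z.
   When the conditioning probability vanishes, (1) holds trivially because
   P(Y subset X) is antitone in Y. *)
From HB Require Import structures.
From mathcomp Require Import all_boot all_order all_algebra.
From mathcomp Require Import ring.
Set Implicit Arguments. Unset Strict Implicit. Unset Printing Implicit Defensive.
Import Order.TTheory GRing.Theory Num.Theory.
Local Open Scope ring_scope.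

Section Complexes.
Variable n : nat.
Implicit Types Y Z : {set {set 'I_n}}.

Lemma is_complexU Y Z : is_complex Y -> is_complex Z -> is_complex (Y :|: Z).
Proof.
move=> /forallP hY /forallP hZ; apply/forallP=> s; apply/forallP=> t.
apply/implyP=> /andP[]; rewrite !inE => /orP[hs|hs] ht.
  by rewrite (implyP (forallP (hY s) t)) ?hs ?ht.
by rewrite (implyP (forallP (hZ s) t)) ?hs ?ht ?orbT.
Qed.

Lemma is_complexI Y Z : is_complex Y -> is_complex Z -> is_complex (Y :&: Z).
Proof.
move=> /forallP hY /forallP hZ; apply/forallP=> s; apply/forallP=> t.
apply/implyP=> /andP[]; rewrite !inE => /andP[hsY hsZ] ht.
by rewrite (implyP (forallP (hY s) t)) ?hsY ?ht // (implyP (forallP (hZ s) t)) ?hsZ ?ht.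
Qed.

End Complexes.

Lemma eqr_div_prod (R : fieldType) (a b c d : R) :
  c != 0 -> (a / c == b / c * (d / c)) = (a * c == b * d).
Proof.
move=> c_neq0; apply/eqP/eqP => [h | h].
  by rewrite -(divfK c_neq0 a) h; field.
by rewrite -(mulfK c_neq0 a) h; field.
Qed.

Section SpatialIndependence.
Variables (R : realFieldType) (n : nat) (p : {set {set 'I_n}} -> R).
Hypothesis p_ge0 : forall X, 0 <= p X.
Implicit Types Y Z : {set {set 'I_n}}.

Definition cond_on_meet := forall Y1 Y2, is_complex Y1 -> is_complex Y2 ->
  0 < Pin p Y2 -> Pcond p Y1 Y2 = Pcond p Y1 (Y1 :&: Y2).

Definition indep_given_meet := forall Y1 Y2, is_complex Y1 -> is_complex Y2 ->
  0 < Pin p (Y1 :&: Y2) ->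
  Pcond p (Y1 :|: Y2) (Y1 :&: Y2) = Pcond p Y1 (Y1 :&: Y2) * Pcond p Y2 (Y1 :&: Y2).

Definition indep_given_super := forall Y1 Y2 Z,
  is_complex Y1 -> is_complex Y2 -> is_complex Z ->
  Y1 :&: Y2 \subset Z -> 0 < Pin p Z ->
  Pcond p (Y1 :|: Y2) Z = Pcond p Y1 Z * Pcond p Y2 Z.

Lemma PcondE Y1 Y2 : Pcond p Y1 Y2 = Pin p (Y1 :|: Y2) / Pin p Y2.
Proof. by congr (_ / _); apply: eq_bigl => X; rewrite subUset. Qed.

Lemma Pin_ge0 Y : 0 <= Pin p Y.
Proof. exact: sumr_ge0. Qed.

Lemma Pin_le Y Z : Y \subset Z -> Pin p Z <= Pin p Y.
Proof.
move=> sYZ; rewrite /Pin [leRHS](bigID (fun X : {set {set 'I_n}} => Z \subset X)) /=.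
rewrite -[leLHS]addr0 lerD ?sumr_ge0 //.
by under [leRHS]eq_bigl => X do rewrite (andb_idl (subset_trans sYZ)).
Qed.

Lemma Pin_eq0_sub Y Z : Y \subset Z -> Pin p Y = 0 -> Pin p Z = 0.
Proof. by move=> sYZ h; apply/eqP; rewrite eq_le Pin_ge0 andbT -h Pin_le. Qed.

Lemma Pin_meet_gt0 Y1 Y2 : 0 < Pin p Y2 -> 0 < Pin p (Y1 :&: Y2).
Proof. by move=> h; apply: (lt_le_trans h (Pin_le (subsetIr Y1 Y2))). Qed.

Lemma spatially_independent_cond_on_meet :
  spatially_independent p <-> cond_on_meet.
Proof.
split=> [indep Y1 Y2 c1 c2 h2 | cond Y1 Y2 c1 c2].
  rewrite !PcondE (setUidPl (subsetIl Y1 Y2)); apply/eqP.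
  by rewrite eqr_div ?lt0r_neq0 ?Pin_meet_gt0 // indep.
have [h0 | h2] := eqVneq (Pin p Y2) 0.
  by rewrite h0 (Pin_eq0_sub (subsetUr Y1 Y2)) ?mul0r ?mulr0.
have {}h2 : 0 < Pin p Y2 by rewrite lt0r h2 Pin_ge0.
apply/eqP; move: (cond Y1 Y2 c1 c2 h2).
rewrite !PcondE (setUidPl (subsetIl Y1 Y2)) => /eqP.
by rewrite eqr_div ?lt0r_neq0 ?Pin_meet_gt0.
Qed.

Lemma spatially_independent_indep_given_meet :
  spatially_independent p <-> indep_given_meet.
Proof.
have condE Y1 Y2 : Pin p (Y1 :&: Y2) != 0 ->
    (Pcond p (Y1 :|: Y2) (Y1 :&: Y2) == Pcond p Y1 (Y1 :&: Y2) * Pcond p Y2 (Y1 :&: Y2))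
    = (Pin p (Y1 :|: Y2) * Pin p (Y1 :&: Y2) == Pin p Y1 * Pin p Y2).
  move=> hI; rewrite !PcondE eqr_div_prod //.
  by rewrite (setUidPl (subsetIl Y1 Y2)) (setUidPl (subsetIr Y1 Y2))
    (setUidPl (subset_trans (subsetIl Y1 Y2) (subsetUl Y1 Y2))).
split=> [indep Y1 Y2 c1 c2 hI | cond Y1 Y2 c1 c2].
  by apply/eqP; rewrite condE ?lt0r_neq0 // indep.
have [h0 | hI] := eqVneq (Pin p (Y1 :&: Y2)) 0.
  by rewrite h0 (Pin_eq0_sub (subsetIl Y1 Y2)) ?mul0r ?mulr0.
apply/eqP; rewrite -condE //; apply/eqP/cond => //.
by rewrite lt0r hI Pin_ge0.
Qed.

Lemma spatially_independent_indep_given_super :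
  spatially_independent p -> indep_given_super.
Proof.
move=> indep Y1 Y2 Z c1 c2 cZ sZ hZ; apply/eqP.
rewrite !PcondE eqr_div_prod ?lt0r_neq0 //.
have := indep _ _ (is_complexU c1 cZ) (is_complexU c2 cZ).
by rewrite setUACA setUid -setUIl (setUidPr sZ) => ->.
Qed.

Lemma indep_given_super_meet : indep_given_super -> indep_given_meet.
Proof. by move=> h Y1 Y2 c1 c2; apply: h (is_complexI c1 c2) (subxx _). Qed.

End SpatialIndependence.

Theorem lemma3p1 (R : realFieldType) (n : nat) (p : {set {set 'I_n}} -> R)
  (hp : random_subcomplex p) :
  [<-> spatially_independent p;
       forall Y1 Y2 : {set {set 'I_n}}, is_complex Y1 -> is_complex Y2 ->
         0 < Pin p Y2 -> Pcond p Y1 Y2 = Pcond p Y1 (Y1 :&: Y2);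
       forall Y1 Y2 : {set {set 'I_n}}, is_complex Y1 -> is_complex Y2 ->
         0 < Pin p (Y1 :&: Y2) ->
         Pcond p (Y1 :|: Y2) (Y1 :&: Y2)
           = Pcond p Y1 (Y1 :&: Y2) * Pcond p Y2 (Y1 :&: Y2);
       forall Y1 Y2 Z : {set {set 'I_n}},
         is_complex Y1 -> is_complex Y2 -> is_complex Z ->
         Y1 :&: Y2 \subset Z -> 0 < Pin p Z ->
         Pcond p (Y1 :|: Y2) Z = Pcond p Y1 Z * Pcond p Y2 Z].
Proof.
have [p_ge0 _ _] := hp.
have cond := spatially_independent_cond_on_meet p_ge0.
have meet := spatially_independent_indep_given_meet p_ge0.
tfae.
- by move/cond.
- by move/cond/meet.
- by move/meet/spatially_independent_indep_given_super.
- by move/indep_given_super_meet/meet.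
Qed.
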